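(* Let $(X_{1,\infty},f_{1,\infty},\mu_{1,\infty})$ be a metric nonautonomous dynamical system. Suppose each $X_n$ is a disjoint union $X_n=Y_n\,\dot\cup\, Z_n$ of measurable sets with $f_n(Y_n)\subset Y_{n+1}$, $f_n(Z_n)\subset Z_{n+1}$, and $\mu_n(Y_n)=c$ for all $n$, where $0<c\le1$ is a constant. Let $g_n=f_n|_{Y_n}:Y_n\to Y_{n+1}$ and $\nu_n(A)=\mu_n(A)/c$ for measurable $A\subset Y_n$, so that $(Y_{1,\infty},g_{1,\infty},\nu_{1,\infty})$ is a metric NDS. Let $\mathcal{E}$ be an admissible class for $f_{1,\infty}$ such that $\mathcal{P}_{1,\infty}\in\mathcal{E}$ implies $\{\mathcal{P}_n\vee\{Y_n,Z_n\}\}_{n\ge1}\in\mathcal{E}$. Then \[ \mathcal{E}|_{Y_{1,\infty}}:=\{\mathcal{Q}_{1,\infty}\;:\;\exists\,\mathcal{P}_{1,\infty}\in\mathcal{E}\text{ with }\mathcal{Q}_n=\{Y_n\}\vee\mathcal{P}_n\text{ for all }n\} \] is an admissible class for $(Y_{1,\infty},g_{1,\infty})$ and $c\,h_{\mathcal{E}|_{Y_{1,\infty}}}(g_{1,\infty})\le h_{\mathcal{E}}(f_{1,\infty})$. If $c=1$, equality holds.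
   Context: A metric NDS consists of probability spaces $(X_n,\mathcal{A}_n,\mu_n)$ and measurable maps $f_n:X_n\to X_{n+1}$ with $f_n\mu_n=\mu_{n+1}$. $f_k^n=f_{k+n-1}\circ\cdots\circ f_k$, $f_k^{-n}$ = preimage. $\{Y_n\}\vee\mathcal{P}_n$ denotes the partition $\{Y_n\cap P:P\in\mathcal{P}_n\}$ of $Y_n$. $H_\mu(\mathcal{P})=-\sum_P\mu(P)\log\mu(P)$; $h(f_{1,\infty};\mathcal{P}_{1,\infty})=\limsup_n\frac1nH_{\mu_1}(\bigvee_{i=0}^{n-1}f_1^{-i}\mathcal{P}_{i+1})$ (and analogously for $g_{1,\infty}$ with $\nu_1$); $h_{\mathcal{E}}(f_{1,\infty})=\sup_{\mathcal{P}_{1,\infty}\in\mathcal{E}}h(f_{1,\infty};\mathcal{P}_{1,\infty})$. Admissible class for an NDS $f_{1,\infty}$: a nonempty class $\mathcal{E}$ of sequences of finite measurable partitions $\{\mathcal{P}_n\}$ of $X_n$ such that (A) for each member, $\#\mathcal{P}_n\le N$ for some $N$ and all $n$; (B) $\mathcal{E}$ is closed under passing to termwise coarser sequences; (C) if $\mathcal{P}_{1,\infty}\in\mathcal{E}$ and $m\ge1$, then the sequence $\{\bigvee_{i=0}^{m-1}f_k^{-i}\mathcal{P}_{k+i}\}_{k\ge1}$ belongs to $\mathcal{E}$. *)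

From HB Require Import structures.
From mathcomp Require Import all_boot all_order all_algebra.
From mathcomp Require Import all_classical all_reals all_analysis.
Set Implicit Arguments. Unset Strict Implicit. Unset Printing Implicit Defensive.
Import Order.TTheory GRing.Theory Num.Theory.
Local Open Scope classical_set_scope.
Local Open Scope ring_scope.

(* A nonautonomous system is given by spaces X n (n : nat; index 0 plays the
   role of the paper's index 1), maps f n : X n -> X n.+1, and a "carrier"
   D n (a subset of X n: D n = setT for the full system, D n = Y n for the
   restricted system, on which the maps act by restriction). *)

Section Defs.
Context (R : realType) (d : nat -> measure_display)
        (X : forall n, measurableType (d n)).

Definition partition_of (dT : measure_display) (T : measurableType dT)
  (D : set T) (P : set (set T)) : Prop :=
  [/\ finite_set P,
      (forall A, P A -> measurable A /\ A `<=` D),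
      (forall A B, P A -> P B -> A `&` B !=set0 -> A = B) &
      \bigcup_(A in P) A = D].

Definition card_le (T : Type) (P : set (set T)) (N : nat) : Prop :=
  exists F : nat -> set T, P = F @` `I_N.

Definition coarser (T : Type) (Q P : set (set T)) : Prop :=
  forall A, P A -> exists2 B, Q B & A `<=` B.

Definition pjoin (T : Type) (P Q : set (set T)) : set (set T) :=
  [set C | exists2 A, P A & exists2 B, Q B & C = A `&` B].

(* djoin D f P m k = \/_{i=0}^{m-1} (f_k^i|_D)^{-1} P_{k+i}, as a partition of D k,
   computed by P_k \/ (f_k|_{D k})^{-1} (djoin (m-1) (k+1)). *)
Definition djoin (D : forall n, set (X n)) (f : forall n, X n -> X n.+1)
  (P : forall n, set (set (X n))) : nat -> forall k, set (set (X k)) :=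
  fix dj (m : nat) : forall k, set (set (X k)) :=
  match m with
  | 0 => fun k => [set D k]
  | m'.+1 => fun k =>
      [set C | exists2 A, P k A &
               exists2 B, dj m' k.+1 B & C = A `&` (D k `&` f k @^-1` B)]
  end.
Arguments djoin : clear implicits.

Definition admissible (D : forall n, set (X n)) (f : forall n, X n -> X n.+1)
  (E : set (forall n, set (set (X n)))) : Prop :=
  [/\ E !=set0,
      (forall P, E P -> forall n, partition_of (D n) (P n)),
      (forall P, E P -> exists N, forall n, card_le (P n) N),
      (forall P Q, E P ->
         (forall n, partition_of (D n) (Q n) /\ coarser (Q n) (P n)) -> E Q) &
      (forall P m, E P -> (1 <= m)%N -> E (djoin D f P m))].

(* H_m(P) = - sum_{A in P} m(A) log m(A)   (with 0 log 0 = 0, as ln 0 = 0) *)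
Definition entropy (T : Type) (m : set T -> R) (P : set (set T)) : R :=
  - \sum_(A \in P) m A * ln (m A).

Definition ent_seq (D : forall n, set (X n)) (f : forall n, X n -> X n.+1)
  (m : set (X 0%N) -> R) (P : forall n, set (set (X n))) : \bar R :=
  limn_esup (fun n => (entropy m (djoin D f P n 0%N) / n%:R)%:E).

Definition ent_class (D : forall n, set (X n)) (f : forall n, X n -> X n.+1)
  (m : set (X 0%N) -> R) (E : set (forall n, set (set (X n)))) : \bar R :=
  ereal_sup [set ent_seq D f m P | P in E].

Definition restrict_class (Y : forall n, set (X n))
  (E : set (forall n, set (set (X n)))) : set (forall n, set (set (X n))) :=
  [set Q | exists2 P, E P & forall n, Q n = pjoin [set Y n] (P n)].

End Defs.
Arguments djoin {d X} D f P m k.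

From HB Require Import structures.
From mathcomp Require Import all_boot all_order all_algebra.
From mathcomp Require Import all_classical all_reals all_analysis.
Import Order.TTheory GRing.Theory Num.Theory.
Local Open Scope classical_set_scope.
Local Open Scope ring_scope.

(* Since f maps Y into Y, intersecting with Y commutes with forming the
   iterated joins, so the n-th join of the restricted partition Y /\ P consists
   of the blocks of the n-th join of P \/ {Y, Z} that lie in Y.  Dropping the
   other blocks only removes nonnegative terms -x log x, and for c <= 1
   renormalising by c gives -x log x <= -c (x/c) log (x/c); hence
   c H_nu <= H_mu for every n, and c h_g <= h_f after the limsup and the sup.
   If c = 1 then Y has full measure, intersecting with Y changes no measure,
   and the two entropies agree term by term.  Admissibility of the restricted
   class only needs that a partition of Y coarser than Y /\ P extends to a
   partition of X coarser than P \/ {Y, Z}, by merging Z into one block. *)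

Lemma pjoin1E (T : Type) (A : set T) (P : set (set T)) :
  pjoin [set A] P = (fun B => A `&` B) @` P.
Proof.
apply/seteqP; split => C /=.
  by move=> [_ -> [B PB ->]]; exists B.
by move=> [B PB <-]; exists A => //; exists B.
Qed.

Lemma partition_of_restrict {dT : measure_display} {T : measurableType dT}
    {D : set T} {P : set (set T)} :
  measurable D -> partition_of setT P -> partition_of D (pjoin [set D] P).
Proof.
move=> mD [finP mP disjP covP]; rewrite pjoin1E; split.
- exact: finite_image.
- by move=> _ [A /mP[mA _] <-]; split; [exact: measurableI | exact: subIsetl].
- move=> _ _ [A PA <-] [B PB <-] [x [[_ xA] [_ xB]]].
  by rewrite (disjP A B) //; exists x.
- apply/seteqP; split => [x [_ [A PA <-] [Dx _]] // | x Dx].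
  have [A PA Ax] : (\bigcup_(A in P) A) x by rewrite covP.
  by exists (D `&` A) => //; exists A.
Qed.

Lemma partition_of_sub {dT : measure_display} {T : measurableType dT}
    {D : set T} {P : set (set T)} {A : set T} :
  partition_of D P -> P A -> A `<=` D.
Proof. by case=> _ mP _ _ /mP[]. Qed.

Lemma partition_of_block {dT : measure_display} {T : measurableType dT}
    {D : set T} {P : set (set T)} :
  partition_of D P -> D !=set0 -> exists B, P B.
Proof.
move=> [_ _ _ covP] [x Dx].
have [B PB _] : (\bigcup_(B in P) B) x by rewrite covP.
by exists B.
Qed.

Definition extend_partition {T : Type} (Z : set T) (Q : set (set T)) (B : set T) :
  set (set T) := (Q `\` [set B]) `|` [set B `|` Z].

Section ExtendPartition.
Context (dT : measure_display) (T : measurableType dT).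
Variables (D Z : set T).
Hypotheses (DZ0 : D `&` Z = set0) (DZT : D `|` Z = setT).

Variables (Q : set (set T)) (B : set T).
Hypotheses (partQ : partition_of D Q) (QB : Q B).

Let block_sub (A : set T) : Q A -> A `<=` D := partition_of_sub partQ.

Lemma setI_merged_block : D `&` (B `|` Z) = B.
Proof. by rewrite setIUr DZ0 setU0; apply/setIidr/block_sub. Qed.

Lemma pjoin_extend_partition : pjoin [set D] (extend_partition Z Q B) = Q.
Proof.
rewrite pjoin1E; apply/seteqP; split => [_ [A [[QA _] | ->] <-] | A QA].
- by rewrite setIidr //; exact: block_sub.
- by rewrite setI_merged_block.
have [->|nAB] := pselect (A = B).
  by exists (B `|` Z); [right | exact: setI_merged_block].
by exists A; [left | exact/setIidr/block_sub].
Qed.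

Lemma partition_of_extend :
  measurable Z -> partition_of setT (extend_partition Z Q B).
Proof.
move=> mZ; have [finQ mQ disjQ covQ] := partQ.
have inBZ A x : Q A -> A x -> (B `|` Z) x -> A = B.
  move=> QA Ax [Bx|Zx]; first by apply: disjQ => //; exists x.
  have DZx : (D `&` Z) x by split => //; exact: block_sub QA _ Ax.
  by rewrite DZ0 in DZx.
split.
- by rewrite finite_setU; split; [exact: finite_setD | exact: finite_set1].
- move=> A [[/mQ[mA _] _] | ->] //.
  by split => //; apply: measurableU => //; have [] := mQ B QB.
- move=> A C [[QA nA]|->] [[QC nC]|->] [x [Ax Cx]] //.
  + by apply: disjQ => //; exists x.
  + by have := inBZ A x QA Ax Cx.
  + by have := inBZ C x QC Cx Ax.
- apply/seteqP; split => // x _.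
  have : (D `|` Z) x by rewrite DZT.
  move=> [Dx|Zx]; last by exists (B `|` Z); [right | right].
  have [A QA Ax] : (\bigcup_(A in Q) A) x by rewrite covQ.
  have [eAB|nAB] := pselect (A = B).
    by exists (B `|` Z); [right | left; rewrite -eAB].
  by exists A; [left|].
Qed.

Lemma coarser_extend (P : set (set T)) :
  coarser Q (pjoin [set D] P) ->
  coarser (extend_partition Z Q B) (pjoin P ([set D] `|` [set Z])).
Proof.
move=> crs _ [A PA [W [->|->] ->]]; last first.
  by exists (B `|` Z); [right | move=> x [_ Zx]; right].
have [C QC AC] : exists2 C, Q C & D `&` A `<=` C.
  by apply: crs; exists D => //; exists A.
rewrite setIC; have [eCB|nCB] := pselect (C = B).
  by exists (B `|` Z); [right | move=> x /AC Cx; left; rewrite -eCB].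
by exists C; [left|].
Qed.

End ExtendPartition.

Section JoinRestrict.
Context {d : nat -> measure_display} {X : forall n, measurableType (d n)}
  {f : forall n, X n -> X n.+1} {Y : forall n, set (X n)}.
Hypothesis fY : forall n, f n @` Y n `<=` Y n.+1.

Lemma setI_preimage_restrict k (B : set (X k.+1)) :
  Y k `&` f k @^-1` (Y k.+1 `&` B) = Y k `&` f k @^-1` B.
Proof.
rewrite preimage_setI setIA; congr (_ `&` _).
by apply/setIidl => x Yx; apply: fY; exists x.
Qed.

Lemma djoin_restrict (P : forall n, set (set (X n))) m k :
  djoin Y f (fun n => pjoin [set Y n] (P n)) m k =
  pjoin [set Y k] (djoin (fun n => setT) f P m k).
Proof.
elim: m k => [|m IH] k /=; first by rewrite pjoin1E image_set1 setIT.
have blockE A B : (Y k `&` A) `&` (Y k `&` f k @^-1` (Y k.+1 `&` B)) =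
                  Y k `&` (A `&` (setT `&` f k @^-1` B)).
  by rewrite setI_preimage_restrict setIACA setIid setTI.
rewrite IH !pjoin1E; apply/seteqP; split => C /=.
  move=> [_ [A PA <-] [_ [B HB <-] ->]].
  by exists (A `&` (setT `&` f k @^-1` B)); [exists A => //; exists B | ].
move=> [_ [A PA [B HB ->]] <-].
exists (Y k `&` A); first by exists A.
by exists (Y k.+1 `&` B); [exists B | rewrite blockE].
Qed.

Lemma djoin_refine (Z : forall n, set (X n)) (P : forall n, set (set (X n))) m k B :
  djoin (fun n => setT) f P m.+1 k B ->
  djoin (fun n => setT) f (fun n => pjoin (P n) ([set Y n] `|` [set Z n])) m.+1 k
    (Y k `&` B).
Proof.
elim: m k B => [|m IH] k B /= [A PA [B' HB' ->]].
  exists (A `&` Y k); first by exists A => //; exists (Y k) => //; left.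
  by exists B' => //; rewrite -setIA setICA.
exists (A `&` Y k); first by exists A => //; exists (Y k) => //; left.
exists (Y k.+1 `&` B'); first exact: IH.
by rewrite !setTI -setIA setI_preimage_restrict setICA.
Qed.

End JoinRestrict.

Section RestrictClass.
Context {d : nat -> measure_display} {X : forall n, measurableType (d n)}
  {f : forall n, X n -> X n.+1} {Y Z : forall n, set (X n)}
  {E : set (forall n, set (set (X n)))}.
Hypotheses (fY : forall n, f n @` Y n `<=` Y n.+1)
  (mY : forall n, measurable (Y n)) (mZ : forall n, measurable (Z n))
  (YZ0 : forall n, Y n `&` Z n = set0) (YZT : forall n, Y n `|` Z n = setT)
  (Yne : forall n, Y n !=set0)
  (EA : admissible (fun n => setT) f E)
  (EjoinYZ : forall P, E P -> E (fun n => pjoin (P n) ([set Y n] `|` [set Z n]))).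

Lemma restrict_class_coarser (Q Q' : forall n, set (set (X n))) :
  restrict_class Y E Q ->
  (forall n, partition_of (Y n) (Q' n) /\ coarser (Q' n) (Q n)) ->
  restrict_class Y E Q'.
Proof.
move=> [P EP QE] Q'part; have [_ _ _ Ecoarse _] := EA.
pose B n := xget set0 (Q' n).
have Q'B n : Q' n (B n).
  by apply: xgetPex; apply: partition_of_block (Yne n); case: (Q'part n).
exists (fun n => extend_partition (Z n) (Q' n) (B n)); last first.
  by move=> n; rewrite pjoin_extend_partition //; case: (Q'part n).
apply: (Ecoarse _ _ (EjoinYZ _ EP)) => n; have [partQ' crsQ'] := Q'part n.
split; first exact: partition_of_extend.
by apply: coarser_extend; rewrite -QE.
Qed.

Lemma restrict_class_admissible : admissible Y f (restrict_class Y E).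
Proof.
have [[P EP] Epart Ecard _ Ejoin] := EA; split.
- by exists (fun n => pjoin [set Y n] (P n)); exists P.
- move=> Q [P' EP' QE] n; rewrite QE.
  exact: partition_of_restrict (mY n) (Epart _ EP' n).
- move=> Q [P' EP' QE]; have [N cardP] := Ecard P' EP'; exists N => n.
  have [F PF] := cardP n; exists (fun i => Y n `&` F i).
  by rewrite QE pjoin1E PF image_comp.
- exact: restrict_class_coarser.
- move=> Q m [P' EP' QE] m_gt0.
  rewrite (functional_extensionality_dep QE).
  by exists (djoin (fun n => setT) f P' m); [exact: Ejoin | exact: djoin_restrict].
Qed.

End RestrictClass.

Lemma ler_fsum (R : numDomainType) (I : choiceType) (S : set I) (F G : I -> R) :
  finite_set S -> (forall i, S i -> F i <= G i) ->
  \sum_(i \in S) F i <= \sum_(i \in S) G i.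
Proof.
move=> finS FG; rewrite !fsbig_finite // big_seq [leRHS]big_seq.
by apply: ler_sum => i; rewrite in_fset_set // in_setE; exact: FG.
Qed.

Lemma ler_fsum_npos_subset (R : numDomainType) (I : choiceType) (S1 S2 : set I)
    (F : I -> R) :
  finite_set S2 -> S1 `<=` S2 -> (forall i, S2 i -> F i <= 0) ->
  \sum_(i \in S2) F i <= \sum_(i \in S1) F i.
Proof.
move=> finS2 S12 F0; rewrite (fsbigID S1) // setIidr // gerDl.
by apply: fsumr_le0 => i [S2i _]; exact: F0.
Qed.

Lemma fsbig_image_supp (R : numDomainType) (I J : choiceType) (S : set I)
    (g : I -> J) (h : J -> R) :
  (forall a b, S a -> S b -> h (g a) <> 0 -> g a = g b -> a = b) ->
  \sum_(j \in g @` S) h j = \sum_(i \in S) h (g i).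
Proof.
move=> ginj; rewrite fsbig_supp [RHS]fsbig_supp.
have -> : g @` S `&` h @^-1` [set~ 0] =
    g @` (S `&` (fun i => h (g i)) @^-1` [set~ 0]).
  apply/seteqP; split => [j [[i Si <-] hj] | _ [i [Si hi] <-]]; first by exists i.
  by split => //; exists i.
rewrite fsbig_image // => a b /[!inE] -[Sa ha] [Sb _]; exact: ginj.
Qed.

Lemma xlnx_le_scale (R : realType) (c x : R) : 0 <= x -> 0 < c -> c <= 1 ->
  x * ln x <= c * (x / c * ln (x / c)).
Proof.
move=> x_ge0 c_gt0 c_le1; rewrite mulrA (mulrC c) divfK ?gt_eqF //.
have [->|x_neq0] := eqVneq x 0; first by rewrite !mul0r.
have x_gt0 : 0 < x by rewrite lt0r x_neq0.
rewrite ler_wpM2l // ln_div ?posrE // lerDl oppr_ge0; exact: ln_le0.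
Qed.

Lemma limn_esup_pZl_le (R : realType) (c : R) (u v : nat -> \bar R) : 0 < c ->
  (forall n, (c%:E * u n <= v n)%E) -> (c%:E * limn_esup u <= limn_esup v)%E.
Proof.
move=> c_gt0 uv; rewrite /limn_esup /limf_esup -ereal_inf_pZl //.
apply: le_ereal_inf_tmp => _ [V FV <-].
apply: ge_ereal_inf; exists (c%:E * ereal_sup (u @` V))%E.
  by exists (ereal_sup (u @` V)) => //; exists V.
rewrite -ereal_sup_pZl //; apply: ge_ereal_sup => _ [_ [n Vn <-] <-].
by apply: le_trans (uv n) _; apply: ereal_sup_ubound; exists n.
Qed.

Section Entropy.
Context (R : realType) (dT : measure_display) (T : measurableType dT)
  (mu : probability T R).

Lemma fine_measure_ge0 A : 0 <= fine (mu A).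
Proof. exact/fine_ge0/measure_ge0. Qed.

Lemma fine_measure_le1 A : measurable A -> fine (mu A) <= 1.
Proof.
move=> mA; have := probability_le1 mu mA.
by rewrite -[mu A]fineK ?fin_num_measure // lee_fin.
Qed.

(* Passing to a sub-family drops nonnegative terms -x log x, and each
   remaining term only grows when the measure is renormalised by c <= 1. *)
Lemma entropy_scale_le (c : R) (S1 S2 : set (set T)) : 0 < c -> c <= 1 ->
  finite_set S2 -> S1 `<=` S2 -> (forall A, S2 A -> measurable A) ->
  c * entropy (fun A => fine (mu A) / c) S1 <= entropy (fun A => fine (mu A)) S2.
Proof.
move=> c_gt0 c_le1 finS2 S12 mS2; rewrite /entropy mulrN lerN2 mulr_fsumr.
apply: (@le_trans _ _ (\sum_(A \in S1) fine (mu A) * ln (fine (mu A)))).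
  apply: ler_fsum_npos_subset => // A /mS2 mA.
  exact/mulr_ge0_le0/ln_le0/fine_measure_le1/mA/fine_measure_ge0.
apply: ler_fsum => [|A _]; first exact: sub_finite_set finS2.
exact/xlnx_le_scale/c_le1/c_gt0/fine_measure_ge0.
Qed.

Lemma measure_setI_full (Yo A : set T) : measurable Yo -> measurable A ->
  mu Yo = 1%E -> mu (Yo `&` A) = mu A.
Proof.
move=> mYo mA muYo; have muCYo : mu (~` Yo) = 0%E.
  by rewrite probability_setC // muYo subee.
rewrite [RHS](measureDI mu mA mYo) setIC [X in (X + _)%E](_ : _ = 0%E) ?add0e //.
apply/eqP; rewrite -measure_le0 -muCYo; apply: le_measure; rewrite ?inE.
- exact: measurableD.
- exact: measurableC.
- exact: subIsetr.
Qed.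

Lemma entropy_pjoin_full (Yo : set T) (S : set (set T)) :
  measurable Yo -> mu Yo = 1%E -> (forall A, S A -> measurable A) ->
  (forall A B, S A -> S B -> A `&` B !=set0 -> A = B) ->
  entropy (fun A => fine (mu A)) (pjoin [set Yo] S) =
  entropy (fun A => fine (mu A)) S.
Proof.
move=> mYo muYo mS disjS; rewrite /entropy pjoin1E fsbig_image_supp.
  congr (- _); apply: eq_fsbigr => A /[!inE] SA.
  by rewrite measure_setI_full //; exact: mS.
move=> A B SA SB nz AB; apply: disjS => //; apply/set0P/negP => /eqP AB0.
apply: nz; suff -> : Yo `&` A = set0 by rewrite measure0 /= mul0r.
apply/seteqP; split => // x YAx.
have [_ Bx] : (Yo `&` B) x by rewrite -AB.
by rewrite -AB0; split => //; case: YAx.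
Qed.

End Entropy.

Section EntropyRestrict.
Context {R : realType} {d : nat -> measure_display}
  {X : forall n, measurableType (d n)} {mu : forall n, probability (X n) R}
  {f : forall n, X n -> X n.+1} {Y Z : forall n, set (X n)}
  {E : set (forall n, set (set (X n)))} {c : R}.
Hypotheses (fY : forall n, f n @` Y n `<=` Y n.+1)
  (EA : admissible (fun n => setT) f E)
  (EjoinYZ : forall P, E P -> E (fun n => pjoin (P n) ([set Y n] `|` [set Z n])))
  (c_gt0 : 0 < c) (c_le1 : c <= 1).

Lemma ent_seq_restrict_le (P : forall n, set (set (X n))) : E P ->
  (c%:E * ent_seq Y f (fun A => fine (mu 0%N A) / c)%R
                    (fun n => pjoin [set Y n] (P n)) <=
   ent_seq (fun n => setT) f (fun A => fine (mu 0%N A))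
           (fun n => pjoin (P n) ([set Y n] `|` [set Z n])))%E.
Proof.
move=> EP; have [_ Epart _ _ Ejoin] := EA.
apply: limn_esup_pZl_le => // -[|n]; first by rewrite mulr0n invr0 !mulr0 mule0.
rewrite -EFinM lee_fin mulrA ler_wpM2r ?invr_ge0 ?ler0n //.
have [finJ mJ _ _] := Epart _ (Ejoin _ n.+1 (EjoinYZ _ EP) isT) 0%N.
apply: entropy_scale_le => //; last by move=> A /mJ[].
rewrite (djoin_restrict fY) pjoin1E => _ [B JB <-].
exact: djoin_refine.
Qed.

Lemma ent_class_restrict_le :
  (c%:E * ent_class Y f (fun A => fine (mu 0%N A) / c)%R (restrict_class Y E) <=
   ent_class (fun n => setT) f (fun A => fine (mu 0%N A)) E)%E.
Proof.
rewrite /ent_class -ereal_sup_pZl //.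
apply: ge_ereal_sup => _ [_ [Q [P EP QE] <-] <-].
rewrite (functional_extensionality_dep QE).
apply: le_trans (ent_seq_restrict_le _ EP) _.
by apply: ereal_sup_ubound; exists (fun n => pjoin (P n) ([set Y n] `|` [set Z n]));
  first exact: EjoinYZ.
Qed.

Hypotheses (mY0 : measurable (Y 0%N)) (muY0 : mu 0%N (Y 0%N) = 1%E).

Lemma ent_seq_restrict_full (P : forall n, set (set (X n))) : E P ->
  ent_seq (fun n => setT) f (fun A => fine (mu 0%N A)) P =
  ent_seq Y f (fun A => fine (mu 0%N A)) (fun n => pjoin [set Y n] (P n)).
Proof.
move=> EP; have [_ Epart _ _ Ejoin] := EA.
congr limn_esup; apply/funext => -[|n]; first by rewrite mulr0n invr0 !mulr0.
have [_ mJ disjJ _] := Epart _ (Ejoin P n.+1 EP isT) 0%N.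
rewrite (djoin_restrict fY) entropy_pjoin_full //.
by move=> A /mJ[].
Qed.

Lemma ent_class_le_restrict :
  (ent_class (fun n => setT) f (fun A => fine (mu 0%N A)) E <=
   ent_class Y f (fun A => fine (mu 0%N A)) (restrict_class Y E))%E.
Proof.
apply: ge_ereal_sup => _ [P EP <-]; rewrite ent_seq_restrict_full //.
by apply: ereal_sup_ubound; exists (fun n => pjoin [set Y n] (P n)) => //; exists P.
Qed.

End EntropyRestrict.

Theorem mainTheorem6 (R : realType) (d : nat -> measure_display)
  (X : forall n, measurableType (d n))
  (mu : forall n, probability (X n) R)
  (f : forall n, X n -> X n.+1)
  (Y Z : forall n, set (X n)) (c : R)
  (E : set (forall n, set (set (X n)))) :
  (forall n, measurable_fun setT (f n)) ->
  (forall n A, measurable A -> mu n (f n @^-1` A) = mu n.+1 A) ->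
  (forall n, measurable (Y n)) -> (forall n, measurable (Z n)) ->
  (forall n, Y n `&` Z n = set0) -> (forall n, Y n `|` Z n = setT) ->
  (forall n, f n @` Y n `<=` Y n.+1) -> (forall n, f n @` Z n `<=` Z n.+1) ->
  0 < c -> c <= 1 ->
  (forall n, mu n (Y n) = c%:E) ->
  admissible (fun n => setT) f E ->
  (forall P, E P -> E (fun n => pjoin (P n) ([set Y n] `|` [set Z n]))) ->
  let EY := restrict_class Y E in
  let hf := ent_class (fun n => setT) f (fun A => fine (mu 0%N A)) E in
  let hg := ent_class Y f (fun A => fine (mu 0%N A) / c) EY in
  [/\ admissible Y f EY,
      (c%:E * hg <= hf)%E &
      (c = 1 -> hg = hf)].
Proof.
move=> _ _ mY mZ YZ0 YZT fY _ c_gt0 c_le1 muY EA EjoinYZ EY hf hg.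
have Yne n : Y n !=set0.
  apply/set0P/negP => /eqP Y0; move: (muY n).
  by rewrite Y0 measure0 => -[c0]; rewrite -c0 ltxx in c_gt0.
have hg_le : (c%:E * hg <= hf)%E.
  exact: ent_class_restrict_le fY EA EjoinYZ c_gt0 c_le1.
split => //; first exact: restrict_class_admissible fY mY mZ YZ0 YZT Yne EA EjoinYZ.
move=> c1; apply/le_anti/andP; split; first by rewrite -[hg]mul1e -c1.
rewrite /hg (_ : (fun A => _ / c) = (fun A => fine (mu 0%N A))).
  by apply: ent_class_le_restrict fY EA (mY 0%N) _; rewrite muY c1.
by apply/funext => A; rewrite c1 divr1.
Qed.
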